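(* Let $f_1,\dots,f_n:\mathbb{R}^d\to\mathbb{R}$ satisfy Assumptions A1 and A2. Then for all $x\in\mathbb{R}^d$ and $\beta\in\Delta^{n-1}$, \[\|\nabla x^*(\beta)-\widehat{\nabla}x^*(x,\beta)\|_{1,2}\le\frac{1}{\mu}\frac{M_1}{2M_0}\|\nabla f_\beta(x)\|_2.\]
   Context: Assumption A1: each $f_i$ is twice differentiable with $\mu\mathbf{I}\preceq\nabla^2 f_i\preceq L\mathbf{I}$, $0<\mu\le L$, $\kappa:=L/\mu$. Assumption A2: each $\nabla^2 f_i$ is $L_H$-Lipschitz (operator norm). $F=(f_1,\dots,f_n)$, $\nabla F(x)\in\mathbb{R}^{n\times d}$ its Jacobian, $f_\beta=\sum_i\beta_if_i$, $x^*(\beta)=x_\beta=\operatorname{argmin}_x f_\beta(x)$, so $\nabla x^*(\beta)=-\nabla^2f_\beta(x_\beta)^{-1}\nabla F(x_\beta)^\top$. The approximation is $\widehat{\nabla}x^*(x,\beta):=-\nabla^2 f_\beta(x)^{-1}\nabla F(x)^\top$. $R$ is the $\ell_2$-diameter of the Pareto set of $F$ (the set of $x$ with $\nabla f_\beta(x)=0$ for some $\beta\in\Delta^{n-1}$), $M_0:=\kappa R$, $M_1:=2\kappa^2R(1+L_HR/\mu)$. $\|A\|_{1,2}:=\sup_{\|z\|_1=1}\|Az\|_2$. *)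

From HB Require Import structures.
From mathcomp Require Import all_boot all_order all_algebra.
From mathcomp Require Import all_classical all_reals all_analysis.
Set Implicit Arguments. Unset Strict Implicit. Unset Printing Implicit Defensive.
Import Order.TTheory GRing.Theory Num.Theory.
Import numFieldNormedType.Exports.
Local Open Scope classical_set_scope.
Local Open Scope ring_scope.

Section Defs.
Variable R : realType.

Definition norm2 (m n : nat) (A : 'M[R]_(m, n)) : R :=
  Num.sqrt (\sum_(i < m) \sum_(j < n) A i j ^+ 2).

Definition norm1 (n : nat) (z : 'cV[R]_n) : R := \sum_(i < n) `|z i 0|.

Definition norm12 (d n : nat) (A : 'M[R]_(d, n)) : R :=
  sup [set norm2 (A *m z) | z in [set z : 'cV[R]_n | norm1 z = 1]].

Definition opnorm (d : nat) (A : 'M[R]_d) : R :=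
  sup [set norm2 (A *m v) | v in [set v : 'cV[R]_d | norm2 v = 1]].

Definition loewner_le (d : nat) (A B : 'M[R]_d) : Prop :=
  forall v : 'rV[R]_d, 0 <= (v *m (B - A) *m v^T) 0 0.

Definition grad (d : nat) (f : 'rV[R]_d -> R) (x : 'rV[R]_d) : 'rV[R]_d :=
  \row_j ('d f x (delta_mx 0 j : 'rV[R]_d)).

Definition hess (d : nat) (f : 'rV[R]_d -> R) (x : 'rV[R]_d) : 'M[R]_d :=
  \matrix_(j, k) ('d (grad f) x (delta_mx 0 j : 'rV[R]_d)) 0 k.

Definition twice_differentiable (d : nat) (f : 'rV[R]_d -> R) : Prop :=
  forall x, differentiable f x /\ differentiable (grad f) x.

Definition jacobian (n d : nat) (f : 'I_n -> 'rV[R]_d -> R) (x : 'rV[R]_d)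
  : 'M[R]_(n, d) := \matrix_(i, j) grad (f i) x 0 j.

Definition simplex (n : nat) (beta : 'I_n -> R) : Prop :=
  (forall i, 0 <= beta i) /\ \sum_(i < n) beta i = 1.

Definition fbeta (n d : nat) (f : 'I_n -> 'rV[R]_d -> R) (beta : 'I_n -> R)
  (x : 'rV[R]_d) : R := \sum_(i < n) beta i * f i x.

Definition pareto_set (n d : nat) (f : 'I_n -> 'rV[R]_d -> R) : set 'rV[R]_d :=
  [set x | exists beta, simplex beta /\ grad (fbeta f beta) x = 0].

Definition diam2 (d : nat) (S : set 'rV[R]_d) : R :=
  sup [set norm2 (x - y) | x in S & y in S].

Definition grad_xstar (n d : nat) (f : 'I_n -> 'rV[R]_d -> R) (beta : 'I_n -> R)
  (xb : 'rV[R]_d) : 'M[R]_(d, n) :=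
  - (invmx (hess (fbeta f beta) xb) *m (jacobian f xb)^T).

Definition grad_xstar_hat (n d : nat) (f : 'I_n -> 'rV[R]_d -> R) (x : 'rV[R]_d)
  (beta : 'I_n -> R) : 'M[R]_(d, n) :=
  - (invmx (hess (fbeta f beta) x) *m (jacobian f x)^T).

End Defs.

(* For a unit vector z in the l1 norm, with H_x and H_b the Hessians of f_beta at x and at
   x_beta and a = J(x)^T z, c = J(x_beta)^T z, the error is
     H_x^-1 a - H_b^-1 c = H_x^-1 (a - c + (H_b - H_x) H_b^-1 c).
   Since mu I <= H, |H^-1 v| <= |v| / mu.  Each gradient is L-Lipschitz, so
   |a - c| <= L |x - x_beta|; the Hessians are L_H-Lipschitz, so
   |(H_b - H_x) w| <= L_H |x - x_beta| |w|; and |c| <= L R because x_beta and a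
   minimiser of each f_i both lie in the Pareto set.  Finally grad f_beta vanishes at
   x_beta and is mu-strongly monotone, whence mu |x - x_beta| <= |grad f_beta(x)|.
   The Loewner bounds only constrain the quadratic form of the Hessian (which is not
   known to be symmetric), so the Lipschitz bound on gradients is derived from the
   two-sided Taylor bounds through cocoercivity rather than from an operator norm. *)

From Pilot Require Import Defs.
From HB Require Import structures.
From mathcomp Require Import all_boot all_order all_algebra.
From mathcomp Require Import all_classical all_reals all_analysis.
From mathcomp Require Import ring lra.
Import Order.TTheory GRing.Theory Num.Theory.
Import numFieldNormedType.Exports.
Local Open Scope classical_set_scope.
Local Open Scope ring_scope.
Set Implicit Arguments. Unset Strict Implicit. Unset Printing Implicit Defensive.
Section Frobenius.
Variable R : realType.

Definition dotmx (m n : nat) (A B : 'M[R]_(m, n)) : R :=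
  \sum_(i < m) \sum_(j < n) A i j * B i j.

Lemma norm2E m n (A : 'M[R]_(m, n)) : norm2 A = Num.sqrt (dotmx A A).
Proof. by congr Num.sqrt; apply: eq_bigr => i _; apply: eq_bigr => j _. Qed.

Lemma dotmxC m n (A B : 'M[R]_(m, n)) : dotmx A B = dotmx B A.
Proof. by apply: eq_bigr => i _; apply: eq_bigr => j _; rewrite mulrC. Qed.

Lemma dotmxDl m n (A B C : 'M[R]_(m, n)) : dotmx (A + B) C = dotmx A C + dotmx B C.
Proof.
rewrite /dotmx -big_split; apply: eq_bigr => i _; rewrite -big_split.
by apply: eq_bigr => j _; rewrite !mxE mulrDl.
Qed.

Lemma dotmxZl m n k (A B : 'M[R]_(m, n)) : dotmx (k *: A) B = k * dotmx A B.
Proof.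
rewrite /dotmx mulr_sumr; apply: eq_bigr => i _; rewrite mulr_sumr.
by apply: eq_bigr => j _; rewrite !mxE mulrA.
Qed.

Lemma dotmxNl m n (A B : 'M[R]_(m, n)) : dotmx (- A) B = - dotmx A B.
Proof. by rewrite -scaleN1r dotmxZl mulN1r. Qed.

Lemma dotmxBl m n (A B C : 'M[R]_(m, n)) : dotmx (A - B) C = dotmx A C - dotmx B C.
Proof. by rewrite dotmxDl dotmxNl. Qed.

Lemma dotmxZr m n k (A B : 'M[R]_(m, n)) : dotmx A (k *: B) = k * dotmx A B.
Proof. by rewrite dotmxC dotmxZl dotmxC. Qed.

Lemma dotmxNr m n (A B : 'M[R]_(m, n)) : dotmx A (- B) = - dotmx A B.
Proof. by rewrite dotmxC dotmxNl dotmxC. Qed.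

Lemma dotmxBr m n (A B C : 'M[R]_(m, n)) : dotmx A (B - C) = dotmx A B - dotmx A C.
Proof. by rewrite !(dotmxC A) dotmxBl. Qed.

Lemma dotmx0l m n (B : 'M[R]_(m, n)) : dotmx 0 B = 0.
Proof. by rewrite -(scale0r (0 : 'M[R]_(m, n))) dotmxZl mul0r. Qed.

Lemma dotmxx_ge0 m n (A : 'M[R]_(m, n)) : 0 <= dotmx A A.
Proof. by apply: sumr_ge0 => i _; apply: sumr_ge0 => j _; rewrite -expr2 sqr_ge0. Qed.

Lemma dotmxx_eq0 m n (A : 'M[R]_(m, n)) : (dotmx A A == 0) = (A == 0).
Proof.
apply/idP/eqP => [|->]; last by rewrite dotmx0l.
rewrite psumr_eq0 => [/allP A0|i _]; last first.
  by apply: sumr_ge0 => j _; rewrite -expr2 sqr_ge0.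
apply/matrixP => i j; rewrite mxE; move/implyP: (A0 i (mem_index_enum i)).
rewrite psumr_eq0 => [/(_ isT)/allP/(_ j (mem_index_enum j))|k _].
  by rewrite implyTb mulf_eq0 orbb => /eqP.
by rewrite -expr2 sqr_ge0.
Qed.

Lemma dotmx_tr m n (A B : 'M[R]_(m, n)) : dotmx A^T B^T = dotmx A B.
Proof.
by rewrite /dotmx exchange_big; apply: eq_bigr => i _; apply: eq_bigr => j _; rewrite !mxE.
Qed.

Lemma dotmx_row d (u v : 'rV[R]_d) : (u *m v^T) 0 0 = dotmx u v.
Proof. by rewrite /dotmx big_ord1 !mxE; apply: eq_bigr => j _; rewrite !mxE. Qed.

Lemma norm2_ge0 m n (A : 'M[R]_(m, n)) : 0 <= norm2 A.
Proof. by rewrite norm2E sqrtr_ge0. Qed.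

Lemma sqr_norm2 m n (A : 'M[R]_(m, n)) : norm2 A ^+ 2 = dotmx A A.
Proof. by rewrite norm2E sqr_sqrtr // dotmxx_ge0. Qed.

Lemma norm2_eq0 m n (A : 'M[R]_(m, n)) : (norm2 A == 0) = (A == 0).
Proof. by rewrite -dotmxx_eq0 -sqr_norm2 sqrf_eq0. Qed.

Lemma norm2_gt0 m n (A : 'M[R]_(m, n)) : (0 < norm2 A) = (A != 0).
Proof. by rewrite lt_def norm2_eq0 norm2_ge0 andbT. Qed.

Lemma norm20 m n : norm2 (0 : 'M[R]_(m, n)) = 0.
Proof. by apply/eqP; rewrite norm2_eq0. Qed.

Lemma norm2_tr m n (A : 'M[R]_(m, n)) : norm2 A^T = norm2 A.
Proof. by rewrite !norm2E dotmx_tr. Qed.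

Lemma norm2Z m n k (A : 'M[R]_(m, n)) : norm2 (k *: A) = `|k| * norm2 A.
Proof.
by rewrite !norm2E dotmxZl dotmxZr mulrA -expr2 sqrtrM ?sqr_ge0 // sqrtr_sqr.
Qed.

Lemma norm2N m n (A : 'M[R]_(m, n)) : norm2 (- A) = norm2 A.
Proof. by rewrite -scaleN1r norm2Z normrN1 mul1r. Qed.

Lemma norm2_subC m n (A B : 'M[R]_(m, n)) : norm2 (A - B) = norm2 (B - A).
Proof. by rewrite -norm2N opprB. Qed.

Lemma delta_mx_neq0 m n (i : 'I_m) (j : 'I_n) : delta_mx i j != 0 :> 'M[R]_(m, n).
Proof. by apply/eqP => /matrixP/(_ i j); rewrite !mxE !eqxx => /eqP; rewrite oner_eq0. Qed.

Lemma norm2_le m n (A : 'M[R]_(m, n)) c :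
  0 <= c -> dotmx A A <= c ^+ 2 -> norm2 A <= c.
Proof. by move=> c0; rewrite -sqr_norm2 ler_pXn2r ?nnegrE ?norm2_ge0. Qed.

Lemma ler_norm_entry_norm2 m n (A : 'M[R]_(m, n)) i j : `|A i j| <= norm2 A.
Proof.
rewrite -(ler_pXn2r (_ : (0 < 2)%N)) ?nnegrE ?norm2_ge0 // sqr_norm2.
rewrite real_normK ?num_real // /dotmx (bigD1 i) //= (bigD1 j) //= -expr2 -addrA lerDl.
apply: addr_ge0; apply: sumr_ge0 => k _; last apply: sumr_ge0 => l _.
  by rewrite -expr2 sqr_ge0.
by rewrite -expr2 sqr_ge0.
Qed.

Lemma dotmx_le m n (A B : 'M[R]_(m, n)) : dotmx A B <= norm2 A * norm2 B.
Proof.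
have [->|A0] := eqVneq A 0; first by rewrite dotmx0l norm20 mul0r.
have [->|B0] := eqVneq B 0; first by rewrite dotmxC dotmx0l norm20 mulr0.
have a0 : 0 < norm2 A by rewrite norm2_gt0.
have b0 : 0 < norm2 B by rewrite norm2_gt0.
(* expand 0 <= | |B| A - |A| B |^2 *)
have := dotmxx_ge0 (norm2 B *: A - norm2 A *: B).
rewrite !(dotmxBl, dotmxBr, dotmxZl, dotmxZr) -!sqr_norm2 (dotmxC B A) => h.
have : 0 <= 2 * (norm2 A * norm2 B) * (norm2 A * norm2 B - dotmx A B) by nra.
by rewrite pmulr_rge0 ?subr_ge0 // mulr_gt0 ?mulr_gt0.
Qed.

Lemma ler_norm_dotmx m n (A B : 'M[R]_(m, n)) : `|dotmx A B| <= norm2 A * norm2 B.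
Proof.
by rewrite ler_norml dotmx_le andbT lerNl -dotmxNl -(norm2N A) dotmx_le.
Qed.

Lemma ler_norm2D m n (A B : 'M[R]_(m, n)) : norm2 (A + B) <= norm2 A + norm2 B.
Proof.
apply: norm2_le; first by rewrite addr_ge0 ?norm2_ge0.
rewrite dotmxDl !(dotmxC _ (A + B)) !dotmxDl -!sqr_norm2 (dotmxC A B).
by have := dotmx_le B A; nra.
Qed.

Lemma ler_norm2_sum m n I (r : seq I) (P : pred I) (F : I -> 'M[R]_(m, n)) :
  norm2 (\sum_(i <- r | P i) F i) <= \sum_(i <- r | P i) norm2 (F i).
Proof.
apply: (big_ind2 (fun A a => norm2 A <= a)) => [|A a B b hA hB|//].
  by rewrite norm20.
exact: le_trans (ler_norm2D A B) (lerD hA hB).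
Qed.

Lemma ler_norm2_comb k m n (A : 'I_k -> 'M[R]_(m, n)) (z : 'I_k -> R) c :
  (forall i, norm2 (A i) <= c) -> norm2 (\sum_i z i *: A i) <= (\sum_i `|z i|) * c.
Proof.
move=> Ac; apply: le_trans (ler_norm2_sum _ _ _) _; rewrite mulr_suml.
by apply: ler_sum => i _; rewrite norm2Z ler_wpM2l.
Qed.

Lemma dotmx_sum_row m n (A B : 'M[R]_(m, n)) :
  dotmx A B = \sum_i dotmx (row i A) (row i B).
Proof.
by apply: eq_bigr => i _; rewrite /dotmx big_ord1; apply: eq_bigr => j _; rewrite !mxE.
Qed.

Lemma sqr_dotmx_le m n (A B : 'M[R]_(m, n)) : dotmx A B ^+ 2 <= dotmx A A * dotmx B B.
Proof.
rewrite -!sqr_norm2 -exprMn -real_normK ?num_real //.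
by rewrite lerXn2r ?nnegrE ?mulr_ge0 ?norm2_ge0 // ler_norm_dotmx.
Qed.

Lemma ler_norm2_mulmx m n p (A : 'M[R]_(m, n)) (B : 'M[R]_(n, p)) :
  norm2 (A *m B) <= norm2 A * norm2 B.
Proof.
apply: norm2_le; first by rewrite mulr_ge0 ?norm2_ge0.
rewrite exprMn !sqr_norm2 -(dotmx_tr B) !(dotmx_sum_row _ _) mulr_suml.
apply: ler_sum => i _; rewrite mulr_sumr /dotmx big_ord1; apply: ler_sum => k _.
have -> : (row i (A *m B)) 0 k = dotmx (row i A) (row k B^T).
  by rewrite !mxE /dotmx big_ord1; apply: eq_bigr => j _; rewrite !mxE.
by rewrite -expr2 sqr_dotmx_le.
Qed.

End Frobenius.

Section QuadraticForms.
Variable R : realType.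

Definition qform d (H : 'M[R]_d) (u : 'rV[R]_d) : R := (u *m H *m u^T) 0 0.

Lemma loewner_leP d (A B : 'M[R]_d) :
  loewner_le A B <-> forall u, qform A u <= qform B u.
Proof.
have entryB (X Y : 'M[R]_1) : (X - Y) 0 0 = X 0 0 - Y 0 0 by rewrite !mxE.
by split=> AB u; have := AB u; rewrite mulmxBr mulmxBl entryB subr_ge0.
Qed.

Lemma qform_scalar d a (u : 'rV[R]_d) : qform a%:M u = a * dotmx u u.
Proof. by rewrite /qform mul_mx_scalar -scalemxAl mxE dotmx_row. Qed.

Lemma qform_tr d (H : 'M[R]_d) (c : 'cV[R]_d) : qform H c^T = dotmx c (H *m c).
Proof.
by rewrite /qform trmxK -mulmxA -[X in c^T *m X](trmxK (H *m c)) dotmx_row dotmx_tr.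
Qed.

Lemma loewner_le_sum d n (b : 'I_n -> R) (A B : 'I_n -> 'M[R]_d) :
  (forall i, 0 <= b i) -> (forall i, loewner_le (A i) (B i)) ->
  loewner_le (\sum_i b i *: A i) (\sum_i b i *: B i).
Proof.
move=> b0 AB u; rewrite -sumrB mulmx_sumr mulmx_suml summxE.
by apply: sumr_ge0 => i _; rewrite -scalerBr -scalemxAr -scalemxAl mxE mulr_ge0 ?AB.
Qed.

Section StronglyPositive.
Variables (d : nat) (mu : R) (H : 'M[R]_d).
Hypotheses (mu_gt0 : 0 < mu) (muH : loewner_le mu%:M H).

Lemma loewner_mulmx_ge (c : 'cV[R]_d) : mu * norm2 c <= norm2 (H *m c).
Proof.
have := (loewner_leP _ _).1 muH c^T; rewrite qform_scalar qform_tr dotmx_tr.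
rewrite -sqr_norm2 => qc; have := dotmx_le c (H *m c).
have [->|c0] := eqVneq c 0; first by rewrite norm20 mulr0 norm2_ge0.
have := norm2_gt0 c; rewrite c0; nra.
Qed.

Lemma loewner_unitmx : H \in unitmx.
Proof.
rewrite unitmxE unitfE; apply/negP => /det0P [v v0 vH].
have := (loewner_leP _ _).1 muH v; rewrite qform_scalar /qform vH mul0mx mxE.
by rewrite pmulr_rle0 // => vv; move: v0; rewrite -dotmxx_eq0 eq_le vv dotmxx_ge0.
Qed.

Lemma norm2_invmx_mulmx_le (c : 'cV[R]_d) : norm2 (invmx H *m c) <= mu^-1 * norm2 c.
Proof.
rewrite -(ler_pM2l mu_gt0) mulrA mulfV ?gt_eqF // mul1r.
by have := loewner_mulmx_ge (invmx H *m c); rewrite mulmxA mulmxV ?mul1mx ?loewner_unitmx.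
Qed.

End StronglyPositive.


End QuadraticForms.

Section Suprema.
Variable R : realType.

Lemma opnorm_mulmx_le d (A : 'M[R]_d) (c : 'cV[R]_d) :
  norm2 (A *m c) <= opnorm A * norm2 c.
Proof.
have [->|c0] := eqVneq c 0; first by rewrite mulmx0 norm20 mulr0.
have c_gt0 : 0 < norm2 c by rewrite norm2_gt0.
pose v := (norm2 c)^-1 *: c.
have v1 : norm2 v = 1 by rewrite norm2Z ger0_norm ?invr_ge0 ?norm2_ge0 // mulVf ?gt_eqF.
have Av : norm2 (A *m v) <= opnorm A.
  apply: sup_upper_bound; last by exists v.
  split; first by exists (norm2 (A *m v)), v.
  exists (norm2 A) => _ [w /= w1 <-].
  by have := ler_norm2_mulmx A w; rewrite w1 mulr1.
move: Av; rewrite -scalemxAr norm2Z ger0_norm ?invr_ge0 ?norm2_ge0 //.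
by rewrite -(ler_pM2l c_gt0) mulrA mulfV ?gt_eqF // mul1r mulrC.
Qed.

Lemma opnorm_ge0 d (A : 'M[R]_d) : (0 < d)%N -> 0 <= opnorm A.
Proof.
move=> d_gt0; pose c : 'cV[R]_d := delta_mx (Ordinal d_gt0) 0.
have c_gt0 : 0 < norm2 c by rewrite norm2_gt0 delta_mx_neq0.
by rewrite -(pmulr_lge0 _ c_gt0); apply: le_trans (opnorm_mulmx_le A c); apply: norm2_ge0.
Qed.

Lemma norm12_le d n (A : 'M[R]_(d, n)) c : 0 <= c ->
  (forall z, norm1 z = 1 -> norm2 (A *m z) <= c) -> norm12 A <= c.
Proof.
move=> c0 Ac; rewrite /norm12.
set S := (X in sup X).
have [S0|S0] := pselect (S !=set0); first by apply: ge_sup => // _ [z z1 <-]; exact: Ac.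
suff -> : S = set0 by rewrite sup0.
by apply/seteqP; split=> // a Sa; apply: S0; exists a.
Qed.

Lemma norm2_le_diam2 d (S : set 'rV[R]_d) p0 r p q :
  (forall q, S q -> norm2 (q - p0) <= r) -> S p -> S q -> norm2 (p - q) <= diam2 S.
Proof.
move=> Sr Sp Sq; apply: sup_upper_bound; last by exists p => //; exists q.
split; first by exists (norm2 (p - q)), p => //; exists q.
exists (r + r) => _ [p1 Sp1 [q1 Sq1 <-]].
rewrite -(subrKA p0); apply: le_trans (ler_norm2D _ _) (lerD (Sr _ Sp1) _).
by rewrite norm2_subC Sr.
Qed.

End Suprema.

Section Calculus.
Variable R : realType.

Lemma diff_grad d (f : 'rV[R]_d -> R) p v : 'd f p v = dotmx (grad f p) v.
Proof.
rewrite {1}(row_sum_delta v) linear_sum /dotmx big_ord1.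
by apply: eq_bigr => j _; rewrite linearZ /= !mxE mulrC.
Qed.

Lemma diff_grad_hess d (f : 'rV[R]_d -> R) p v : 'd (grad f) p v = v *m hess f p.
Proof.
apply/matrixP => i j; rewrite (ord1 i) {1}(row_sum_delta v) linear_sum summxE !mxE.
by apply: eq_bigr => k _; rewrite linearZ /= !mxE.
Qed.

Lemma is_derive_line (V : normedModType R) d (F : 'rV[R]_d -> V) (z v : 'rV[R]_d) (t : R) :
  (forall p, differentiable F p) ->
  is_derive t 1 (fun s => F (z + s *: v)) ('d F (z + t *: v) v).
Proof.
move=> dF.
have shiftE : (fun h : R => h^-1 *: (F (z + (h *: 1 + t) *: v) - F (z + t *: v)))
    = (fun h : R => h^-1 *: (F (h *: v + (z + t *: v)) - F (z + t *: v))).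
  by apply/funext => h; rewrite [h *: 1]mulr1 scalerDl addrCA addrA.
apply: DeriveDef; first by rewrite /derivable /= shiftE; exact: diff_derivable.
by rewrite -(deriveE v (dF _)) /derive /= shiftE.
Qed.

Lemma is_derive_entry m n (Phi : R -> 'M[R]_(m, n)) DPhi (t : R) i j :
  is_derive t 1 Phi DPhi -> is_derive t 1 (fun s => Phi s i j) (DPhi i j).
Proof.
move=> [dPhi <-]; apply: DeriveDef; first exact: (derivable_mxP _ _ _).1 dPhi i j.
by rewrite derive_mx // mxE.
Qed.

Lemma is_derive_dotmx m n (Phi : R -> 'M[R]_(m, n)) DPhi (t : R) B :
  is_derive t 1 Phi DPhi -> is_derive t 1 (fun s => dotmx (Phi s) B) (dotmx DPhi B).
Proof.
move=> dPhi.
have -> : (fun s => dotmx (Phi s) B) = \sum_i \sum_j (B i j \*: (fun s => Phi s i j)).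
  apply/funext => s; rewrite /dotmx !fct_sumE; apply: eq_bigr => i _.
  by rewrite !fct_sumE; apply: eq_bigr => j _; rewrite /= mulrC.
apply: is_derive_sum => i; apply: is_derive_sum => j.
by rewrite mulrC; apply: is_deriveZ; apply: is_derive_entry.
Qed.

Section SecondOrder.
Variables (phi psi Q : R -> R).
Hypotheses (phi' : forall t : R, is_derive t 1 phi (psi t))
           (psi' : forall t : R, is_derive t 1 psi (Q t)).

Let continuous_of_derive (g dg : R -> R) a b :
  (forall t : R, is_derive t 1 g (dg t)) -> {within `[a, b], continuous g}.
Proof. by move=> g'; apply: derivable_within_continuous => t _; case: (g' t). Qed.

Lemma taylor2_ge c : (forall t, c <= Q t) -> c / 2 <= phi 1 - phi 0 - psi 0.
Proof.
move=> cQ.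
have psi_ge (t : R) : 0 < t -> c * t <= psi t - psi 0.
  move=> t_gt0; have [s _ ->] := MVT t_gt0 (fun s _ => psi' s) (continuous_of_derive psi').
  by rewrite subr0 ler_pM2r.
pose rho := phi - psi 0 \*: @id R - (c / 2) \*: (@id R * @id R).
have rho' (t : R) : is_derive t 1 rho (psi t - psi 0 - c * t).
  have id' : is_derive t 1 (@id R) 1 := is_derive_id t 1.
  suff <- : psi t - (psi 0)%:A - (c / 2) *: (t%:A + t%:A) = psi t - psi 0 - c * t.
    exact: is_deriveB (is_deriveB (phi' t) (is_deriveZ (psi 0) id'))
                      (is_deriveZ (c / 2) (is_deriveM id' id')).
  by rewrite /GRing.scale /= !mulr1; field.
have rhoE s : rho s = phi s - psi 0 * s - c / 2 * (s * s) by [].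
have [s s01 rho_mvt] :=
  MVT ltr01 (fun s _ => rho' s) (continuous_of_derive rho').
have s_gt0 : 0 < s by move: s01; rewrite in_itv /= => /andP[].
have := psi_ge s s_gt0.
move: rho_mvt; rewrite !rhoE subr0 !mulr1 ?mulr0 ?mul0r ?subr0 => rho_mvt cs.
lra.
Qed.

End SecondOrder.

Lemma taylor2_le (phi psi Q : R -> R) C :
  (forall t : R, is_derive t 1 phi (psi t)) -> (forall t : R, is_derive t 1 psi (Q t)) ->
  (forall t, Q t <= C) -> phi 1 - phi 0 - psi 0 <= C / 2.
Proof.
move=> phi' psi' QC.
have QC' t : (- Q) t >= - C by rewrite lerN2.
have := taylor2_ge (fun t => is_deriveN (phi' t)) (fun t => is_deriveN (psi' t)) QC'.
have oppE (g : R -> R) s : (- g) s = - g s by [].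
rewrite !oppE; lra.
Qed.

End Calculus.

Section QuadraticBounds.
Variables (R : realType) (d : nat) (f : 'rV[R]_d -> R) (g : 'rV[R]_d -> 'rV[R]_d).

Definition quad_lower (m : R) := forall z w,
  m / 2 * dotmx (w - z) (w - z) <= f w - f z - dotmx (g z) (w - z).

Definition quad_upper (L : R) := forall z w,
  f w - f z - dotmx (g z) (w - z) <= L / 2 * dotmx (w - z) (w - z).

Lemma quad_lower_weaken m m' : m' <= m -> quad_lower m -> quad_lower m'.
Proof.
move=> m'm fm z w; apply: le_trans (fm z w).
by rewrite ler_wpM2r ?dotmxx_ge0 // ler_pM2r ?invr_gt0.
Qed.

Lemma grad_eq0_of_min L p : 0 < L -> quad_upper L -> (forall y, f p <= f y) -> g p = 0.
Proof.
move=> L_gt0 fL pmin; apply/eqP; rewrite -dotmxx_eq0 eq_le dotmxx_ge0 andbT.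
(* a gradient step of length 1/L lowers f by at least |g p|^2 / (2L) *)
have := fL p (p - L^-1 *: g p); have := pmin (p - L^-1 *: g p).
rewrite [p - _ - p]addrAC subrr sub0r !(dotmxNl, dotmxNr, dotmxZl, dotmxZr) !opprK.
set G := dotmx (g p) (g p) => h1 h2.
have e : L / 2 * (L^-1 * (L^-1 * G)) = L^-1 / 2 * G by field; rewrite gt_eqF.
have : 0 <= L^-1 / 2 * - G by move: h2; rewrite e; lra.
by rewrite pmulr_rge0 ?oppr_ge0 // divr_gt0 ?invr_gt0.
Qed.

Lemma quad_lower_monotone m x y : quad_lower m ->
  m * dotmx (y - x) (y - x) <= dotmx (g y - g x) (y - x).
Proof.
move=> fm; have := fm x y; have := fm y x.
by rewrite -opprB dotmxNl dotmxNr opprK dotmxNr dotmxBl; lra.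
Qed.

Lemma quad_lower_norm2_grad m x y : 0 <= m -> quad_lower m ->
  m * norm2 (y - x) <= norm2 (g y - g x).
Proof.
move=> m_ge0 fm.
have [->|xy] := eqVneq (y - x) 0; first by rewrite norm20 mulr0 norm2_ge0.
have := quad_lower_monotone x y fm; rewrite -sqr_norm2.
have := dotmx_le (g y - g x) (y - x).
have := norm2_gt0 (y - x); rewrite xy; nra.
Qed.

Lemma cocoercive L x y : 0 < L -> quad_lower 0 -> quad_upper L ->
  L^-1 / 2 * dotmx (g y - g x) (g y - g x) <= f y - f x - dotmx (g x) (y - x).
Proof.
move=> L_gt0 f0 fL; set D := g y - g x; set w := y - L^-1 *: D.
(* compare f at w from below (convexity at x) and from above (smoothness at y) *)
have wx : w - x = (y - x) - L^-1 *: D by rewrite /w addrAC.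
have wy : w - y = - (L^-1 *: D) by rewrite /w addrAC subrr sub0r.
have := f0 x w; have := fL y w.
rewrite wx wy (dotmxBr (g x) (y - x)) !(dotmxNl, dotmxNr, dotmxZl, dotmxZr) !opprK.
have -> : dotmx (g y) D = dotmx (g x) D + dotmx D D by rewrite {2}/D dotmxBl addrC subrK.
have -> : L / 2 * (L^-1 * (L^-1 * dotmx D D)) = L^-1 / 2 * dotmx D D.
  by field; rewrite gt_eqF.
rewrite !mul0r mulrDr; lra.
Qed.

Lemma grad_lipschitz L x y : 0 < L -> quad_lower 0 -> quad_upper L ->
  norm2 (g y - g x) <= L * norm2 (y - x).
Proof.
move=> L_gt0 f0 fL.
have := cocoercive x y L_gt0 f0 fL; have := cocoercive y x L_gt0 f0 fL.
rewrite -[g x - g y]opprB -[x - y]opprB dotmxNl !dotmxNr opprK.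
set D := g y - g x => h1 h2.
have co : L^-1 * norm2 D ^+ 2 <= dotmx D (y - x).
  rewrite sqr_norm2 (dotmxBl (g y) (g x) (y - x)); lra.
have := dotmx_le D (y - x).
have [->|D0] := eqVneq D 0; first by rewrite norm20 mulr_ge0 ?norm2_ge0 // ltW.
have := norm2_gt0 D; rewrite D0 => D_gt0 cs.
have Li_gt0 : 0 < L^-1 by rewrite invr_gt0.
rewrite -(ler_pM2l Li_gt0) mulrA mulVf ?gt_eqF // mul1r.
by rewrite -(ler_pM2r D_gt0); nra.
Qed.

Lemma quad_lower_coercive m x y : 0 < m -> quad_lower m ->
  2 * norm2 (g x) / m <= norm2 (y - x) -> f x <= f y.
Proof.
move=> m_gt0 fm; rewrite ler_pdivrMr // => far.
have := fm x y; rewrite -sqr_norm2.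
have := ler_norm_dotmx (g x) (y - x); rewrite ler_norml => /andP[dot_ge _].
by have := norm2_ge0 (y - x); nra.
Qed.

Lemma exists_minimizer m : 0 < m -> continuous f -> quad_lower m ->
  exists c, forall y, f c <= f y.
Proof.
move=> m_gt0 cf fm.
pose r := 2 * norm2 (g 0) / m.
have r_ge0 : 0 <= r by rewrite divr_ge0 ?mulr_ge0 ?norm2_ge0 ?ltW.
pose box := [set v : 'rV[R]_d | forall j, `[- r, r]%classic (v ord0 j)].
have box_compact : compact box.
  by apply: (@rV_compact _ _ (fun=> `[- r, r]%classic)) => j; exact: segment_compact.
have box0 : box 0 by move=> j /=; rewrite in_itv /= mxE oppr_le0 r_ge0.
have [c _ cmin] := compact_EVT_min (ex_intro _ 0 box0) box_compact
  (continuous_subspaceT cf).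
exists c => y; have [ybox|ybox] := pselect (box y); first exact/cmin/mem_set.
have [j /negP] : exists j, ~ `|y ord0 j| <= r.
  by apply/existsNP => yr; apply: ybox => j /=; rewrite in_itv /= -ler_norml.
rewrite -ltNge => rj; apply: le_trans (cmin 0 (mem_set box0)) _.
apply: quad_lower_coercive m_gt0 fm _.
by rewrite subr0 (le_trans (ltW rj)) ?ler_norm_entry_norm2.
Qed.

End QuadraticBounds.

Section SecondOrderBounds.
Variable R : realType.

Lemma loewner_hess_quad d (f : 'rV[R]_d -> R) mu L : twice_differentiable f ->
  (forall x, loewner_le mu%:M (hess f x)) -> (forall x, loewner_le (hess f x) L%:M) ->
  quad_lower f (grad f) mu /\ quad_upper f (grad f) L.
Proof.
move=> df muH HL.
suff bounds z w : mu / 2 * dotmx (w - z) (w - z) <= f w - f z - dotmx (grad f z) (w - z)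
    <= L / 2 * dotmx (w - z) (w - z).
  by split=> z w; case/andP: (bounds z w).
set v := w - z.
pose phi s := f (z + s *: v).
pose psi s := dotmx (grad f (z + s *: v)) v.
pose Q s := qform (hess f (z + s *: v)) v.
have phi' (t : R) : is_derive t 1 phi (psi t).
  by rewrite /psi -diff_grad; apply: is_derive_line => p; case: (df p).
have psi' (t : R) : is_derive t 1 psi (Q t).
  rewrite /Q /qform dotmx_row -diff_grad_hess.
  by apply: is_derive_dotmx; apply: is_derive_line => p; case: (df p).
have Q_ge t : mu * dotmx v v <= Q t.
  by rewrite -qform_scalar; apply: (loewner_leP _ _).1.
have Q_le t : Q t <= L * dotmx v v.
  by rewrite -qform_scalar; apply: (loewner_leP _ _).1.
have zv : z + v = w by rewrite /v addrC subrK.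
have := taylor2_ge phi' psi' Q_ge; have := taylor2_le phi' psi' Q_le.
by rewrite /phi /psi scale1r scale0r addr0 zv !(mulrAC _ (dotmx v v)) => -> ->.
Qed.

End SecondOrderBounds.

Section Combination.
Variables (R : realType) (d n : nat) (b : 'I_n -> R).

Lemma differentiable_comb (V : normedModType R) (G : 'I_n -> 'rV[R]_d -> V) p :
  (forall i, differentiable (G i) p) -> differentiable (\sum_i b i \*: G i) p.
Proof. by move=> dG; apply: differentiable_sum => i; apply: differentiableZ. Qed.

Lemma diff_comb (V : normedModType R) (G : 'I_n -> 'rV[R]_d -> V) p v :
  (forall i, differentiable (G i) p) ->
  'd (\sum_i b i \*: G i) p v = \sum_i b i *: 'd (G i) p v.
Proof.
move=> dG; have dZ i : differentiable (b i \*: G i) p by apply: differentiableZ.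
have dS := differentiable_comb dG.
rewrite -deriveE // derive_sum; last by move=> i; apply: diff_derivable.
by apply: eq_bigr => i _; rewrite deriveZ ?deriveE //; apply: diff_derivable.
Qed.

Variable f : 'I_n -> 'rV[R]_d -> R.

Lemma fbetaE : fbeta f b = \sum_i b i \*: f i.
Proof. by apply/funext => x; rewrite fct_sumE. Qed.

Lemma grad_fbeta p : (forall i, differentiable (f i) p) ->
  grad (fbeta f b) p = \sum_i b i *: grad (f i) p.
Proof.
move=> df; apply/matrixP => i j; rewrite fbetaE !mxE diff_comb // summxE.
by apply: eq_bigr => k _; rewrite !mxE.
Qed.

Hypothesis df : forall i, twice_differentiable (f i).

Lemma grad_fbetaE : grad (fbeta f b) = \sum_i b i \*: grad (f i).
Proof.
by apply/funext => p; rewrite grad_fbeta ?fct_sumE // => i; case: (df i p).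
Qed.

Lemma twice_differentiable_fbeta : twice_differentiable (fbeta f b).
Proof.
move=> p; rewrite grad_fbetaE fbetaE.
by split; apply: differentiable_comb => i; case: (df i p).
Qed.

Lemma hess_fbeta p : hess (fbeta f b) p = \sum_i b i *: hess (f i) p.
Proof.
have comb v : 'd (\sum_i b i \*: grad (f i)) p v = \sum_i b i *: 'd (grad (f i)) p v.
  by apply: diff_comb => i; case: (df i p).
apply/matrixP => j k; rewrite /hess grad_fbetaE mxE.
transitivity ((\sum_i b i *: 'd (grad (f i)) p 'e_j) 0 k).
  exact: (congr1 (fun M : 'rV[R]_d => M 0 k) (comb _)).
by rewrite !summxE; apply: eq_bigr => i _; rewrite !mxE.
Qed.

End Combination.

Lemma invmx_mulmx_sub (R : realType) k m (P Q : 'M[R]_k) (JP JQ : 'M[R]_(k, m))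
    (z : 'cV[R]_m) : P \in unitmx -> Q \in unitmx ->
  (- (invmx Q *m JQ) - - (invmx P *m JP)) *m z
    = invmx P *m (JP *m z - JQ *m z + (Q - P) *m (invmx Q *m (JQ *m z))).
Proof.
move=> uP uQ; rewrite mulmxBl !mulNmx opprK addrC -!mulmxA.
by rewrite [in RHS]mulmxBl (mulKVmx uQ) mulmxDr !mulmxBr (mulKmx uP) addrA subrK.
Qed.

Section Hypergradient.
Variables (R : realType) (n d : nat) (f : 'I_n -> 'rV[R]_d -> R).

Lemma simplex_gt0 (b : 'I_n -> R) : simplex b -> (0 < n)%N.
Proof.
case=> _; case: n b => // b; rewrite big_ord0 => /eqP.
by rewrite eq_sym oner_eq0.
Qed.

(* [Defs.] is needed because MathComp-Analysis also defines a [jacobian]. *)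
Lemma jacobian_tr_mulmx p (z : 'cV[R]_n) :
  (Defs.jacobian f p)^T *m z = (\sum_i z i 0 *: grad (f i) p)^T.
Proof.
apply/matrixP => j k; rewrite (ord1 k) !mxE summxE.
by apply: eq_bigr => i _; rewrite !mxE mulrC.
Qed.

Lemma grad_xstar_sub_mulmx b x xb (z : 'cV[R]_n) :
  hess (fbeta f b) x \in unitmx -> hess (fbeta f b) xb \in unitmx ->
  (grad_xstar f b xb - grad_xstar_hat f x b) *m z =
  invmx (hess (fbeta f b) x) *m ((Defs.jacobian f x)^T *m z - (Defs.jacobian f xb)^T *m z
    + (hess (fbeta f b) xb - hess (fbeta f b) x)
        *m (invmx (hess (fbeta f b) xb) *m ((Defs.jacobian f xb)^T *m z))).
Proof. exact: invmx_mulmx_sub. Qed.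

Variables (mu L LH : R).
Hypotheses (mu_gt0 : 0 < mu) (muL : mu <= L)
  (df : forall i, twice_differentiable (f i))
  (hess_ge : forall i x, loewner_le mu%:M (hess (f i) x))
  (hess_le : forall i x, loewner_le (hess (f i) x) L%:M)
  (hess_lip : forall i x y, opnorm (hess (f i) x - hess (f i) y) <= LH * norm2 (x - y)).

Let L_gt0 : 0 < L := lt_le_trans mu_gt0 muL.

Lemma hess_fbeta_ge b x : simplex b -> loewner_le mu%:M (hess (fbeta f b) x).
Proof.
case=> b0 b1; rewrite hess_fbeta // -[mu%:M]scale1r -b1 scaler_suml.
exact: loewner_le_sum.
Qed.

Lemma hess_fbeta_le b x : simplex b -> loewner_le (hess (fbeta f b) x) L%:M.
Proof.
case=> b0 b1; rewrite hess_fbeta // -[L%:M]scale1r -b1 scaler_suml.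
exact: loewner_le_sum.
Qed.

Lemma fbeta_quad b : simplex b ->
  quad_lower (fbeta f b) (grad (fbeta f b)) mu /\
  quad_upper (fbeta f b) (grad (fbeta f b)) L.
Proof.
move=> sb; apply: loewner_hess_quad; first exact: twice_differentiable_fbeta.
  by move=> x; apply: hess_fbeta_ge.
by move=> x; apply: hess_fbeta_le.
Qed.

Lemma grad_f_lipschitz i x y : norm2 (grad (f i) y - grad (f i) x) <= L * norm2 (y - x).
Proof.
have [fmu fL] := loewner_hess_quad (df i) (hess_ge i) (hess_le i).
exact: grad_lipschitz L_gt0 (quad_lower_weaken (ltW mu_gt0) fmu) fL.
Qed.

Lemma exists_pareto_critical i : exists2 p, pareto_set f p & grad (f i) p = 0.
Proof.
have [fmu fL] := loewner_hess_quad (df i) (hess_ge i) (hess_le i).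
have cf : continuous (f i) by move=> x; apply: differentiable_continuous; case: (df i x).
have [p pmin] := exists_minimizer mu_gt0 cf fmu.
have gp := grad_eq0_of_min L_gt0 fL pmin.
exists p => //; exists (fun j => (j == i)%:R); split.
  split=> [j|]; first by rewrite ler0n.
  by rewrite (bigD1 i) //= eqxx big1 ?addr0 // => j /negbTE ->.
suff -> : fbeta f (fun j => (j == i)%:R) = f i by [].
apply/funext => y; rewrite /fbeta (bigD1 i) //= eqxx mul1r big1 ?addr0 //.
by move=> j /negbTE ->; rewrite mul0r.
Qed.

Lemma pareto_set_bounded p q : pareto_set f q ->
  norm2 (q - p) <= (\sum_i norm2 (grad (f i) p)) / mu.
Proof.
case=> b [sb gq]; have [b0 b1] := sb.
rewrite ler_pdivlMr // mulrC.
have := quad_lower_norm2_grad p q (ltW mu_gt0) (fbeta_quad sb).1.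
rewrite gq sub0r norm2N grad_fbeta => [mono|i]; last by case: (df i p).
apply: le_trans mono (le_trans (ler_norm2_sum _ _ _) (ler_sum _ _)) => i _.
rewrite norm2Z ger0_norm // ler_piMl ?norm2_ge0 // -b1 (bigD1 i) //= lerDl.
exact: sumr_ge0.
Qed.

Lemma norm2_sub_le_diam p q : pareto_set f p -> pareto_set f q ->
  norm2 (p - q) <= diam2 (pareto_set f).
Proof. by apply: norm2_le_diam2 => q'; apply: (pareto_set_bounded p). Qed.

Lemma norm2_grad_le_diam i p : pareto_set f p ->
  norm2 (grad (f i) p) <= L * diam2 (pareto_set f).
Proof.
move=> pP; have [q qP gq] := exists_pareto_critical i.
rewrite -[grad _ p]subr0 -gq; apply: le_trans (grad_f_lipschitz i q p) _.
by rewrite ler_wpM2l ?(ltW L_gt0) ?norm2_sub_le_diam.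
Qed.

Lemma hess_lip_ge0 (i : 'I_n) : (0 < d)%N -> 0 <= LH.
Proof.
move=> d_gt0; pose e : 'rV[R]_d := delta_mx 0 (Ordinal d_gt0).
have e_gt0 : 0 < norm2 (0 - e) by rewrite sub0r norm2N norm2_gt0 delta_mx_neq0.
rewrite -(pmulr_lge0 _ e_gt0); apply: le_trans (hess_lip i 0 e).
exact: opnorm_ge0.
Qed.

Lemma norm2_jacobian_tr_sub x y (z : 'cV[R]_n) :
  norm2 ((Defs.jacobian f x)^T *m z - (Defs.jacobian f y)^T *m z)
    <= norm1 z * (L * norm2 (x - y)).
Proof.
rewrite [X in X - _]jacobian_tr_mulmx jacobian_tr_mulmx -linearB norm2_tr -sumrB.
under eq_bigr do rewrite -scalerBr.
exact: ler_norm2_comb (fun i => grad_f_lipschitz i y x).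
Qed.

Lemma norm2_jacobian_tr_pareto p (z : 'cV[R]_n) : pareto_set f p ->
  norm2 ((Defs.jacobian f p)^T *m z) <= norm1 z * (L * diam2 (pareto_set f)).
Proof.
move=> pP; rewrite jacobian_tr_mulmx norm2_tr.
exact: ler_norm2_comb (fun i => norm2_grad_le_diam i pP).
Qed.

Lemma norm2_hess_fbeta_sub_mulmx b x y (w : 'cV[R]_d) : simplex b ->
  norm2 ((hess (fbeta f b) y - hess (fbeta f b) x) *m w) <= LH * norm2 (x - y) * norm2 w.
Proof.
case=> b0 b1; rewrite !hess_fbeta // -sumrB mulmx_suml.
rewrite -[LH * _ * _]mul1r -b1 mulr_suml.
apply: le_trans (ler_norm2_sum _ _ _) (ler_sum _ _) => i _.
rewrite -scalerBr -scalemxAl norm2Z ger0_norm // ler_wpM2l //.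
apply: le_trans (opnorm_mulmx_le _ _) _.
by rewrite ler_wpM2r ?norm2_ge0 // norm2_subC hess_lip.
Qed.

Lemma norm2_hypergrad_err_mulmx b x xb (z : 'cV[R]_n) :
  simplex b -> pareto_set f xb -> 0 <= LH ->
  norm2 ((grad_xstar f b xb - grad_xstar_hat f x b) *m z)
    <= norm1 z * (mu^-1 * (L + LH * (mu^-1 * (L * diam2 (pareto_set f)))))
         * norm2 (x - xb).
Proof.
move=> sb xbP LH_ge0; set Rd := diam2 _; set e := norm2 (x - xb).
have Hx_ge := hess_fbeta_ge x sb; have Hb_ge := hess_fbeta_ge xb sb.
rewrite grad_xstar_sub_mulmx ?(loewner_unitmx mu_gt0) //.
apply: le_trans (norm2_invmx_mulmx_le mu_gt0 Hx_ge _) _.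
have -> : norm1 z * (mu^-1 * (L + LH * (mu^-1 * (L * Rd)))) * e
    = mu^-1 * (norm1 z * (L * e) + LH * e * (mu^-1 * (norm1 z * (L * Rd)))) by ring.
have mu'_ge0 : 0 <= mu^-1 by rewrite invr_ge0 ltW.
apply: ler_wpM2l => //.
apply: le_trans (ler_norm2D _ _) (lerD (norm2_jacobian_tr_sub _ _ _) _).
apply: le_trans (norm2_hess_fbeta_sub_mulmx _ _ _ sb) _.
apply: ler_wpM2l; first by rewrite mulr_ge0 ?norm2_ge0.
apply: le_trans (norm2_invmx_mulmx_le mu_gt0 Hb_ge _) _.
by apply: ler_wpM2l => //; apply: norm2_jacobian_tr_pareto.
Qed.

End Hypergradient.

Theorem lemma3 (R : realType) (n d : nat) (f : 'I_n -> 'rV[R]_d -> R)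
  (mu L LH : R)
  (hmu : 0 < mu) (hmuL : mu <= L)
  (A1d : forall i, twice_differentiable (f i))
  (A1l : forall i x, loewner_le (mu%:M) (hess (f i) x))
  (A1u : forall i x, loewner_le (hess (f i) x) (L%:M))
  (A2 : forall i x y, opnorm (hess (f i) x - hess (f i) y) <= LH * norm2 (x - y))
  (x : 'rV[R]_d) (beta : 'I_n -> R) (hbeta : simplex beta)
  (xb : 'rV[R]_d) (hxb : forall y, fbeta f beta xb <= fbeta f beta y) :
  let kappa := L / mu in
  let Rd := diam2 (pareto_set f) in
  norm12 (grad_xstar f beta xb - grad_xstar_hat f x beta)
    <= mu^-1 * (kappa * (1 + LH * Rd / mu)) * norm2 (grad (fbeta f beta) x).
Proof.
cbv zeta; set Rd := diam2 (pareto_set f).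
have [d0|d_gt0] := posnP d.
  subst d; rewrite (thinmx0 (grad _ x)) norm20 mulr0.
  by apply: norm12_le => // z _; rewrite (flatmx0 (_ *m z)) norm20.
have mu_ge0 := ltW hmu; have L_ge0 := le_trans mu_ge0 hmuL.
have LH_ge0 := hess_lip_ge0 A2 (Ordinal (simplex_gt0 hbeta)) d_gt0.
have [fb_mu fb_L] := fbeta_quad A1d A1l A1u hbeta.
have gxb := grad_eq0_of_min (lt_le_trans hmu hmuL) fb_L hxb.
have xbP : pareto_set f xb by exists beta.
have Rd_ge0 : 0 <= Rd :=
  le_trans (norm2_ge0 _) (norm2_sub_le_diam hmu A1d A1l A1u xbP xbP).
have dist : mu * norm2 (x - xb) <= norm2 (grad (fbeta f beta) x).
  by have := quad_lower_norm2_grad xb x mu_ge0 fb_mu; rewrite gxb subr0.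
set K := mu^-1 * (L + LH * (mu^-1 * (L * Rd))).
have K_ge0 : 0 <= K by rewrite !(mulr_ge0, addr_ge0, invr_ge0).
rewrite (_ : mu^-1 * (L / mu * (1 + LH * Rd / mu)) = K / mu); last first.
  by rewrite /K; field; rewrite gt_eqF.
apply: norm12_le => [|z z1]; first by rewrite mulr_ge0 ?divr_ge0 ?norm2_ge0.
have := norm2_hypergrad_err_mulmx hmu hmuL A1d A1l A1u A2 x z hbeta xbP LH_ge0.
move/le_trans; apply.
by rewrite z1 mul1r -mulrA ler_wpM2l // ler_pdivlMl.
Qed.
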